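(* For real $f\ge 0$ define $$I_2(f)=(1+f)\iint_{\pi/2>\alpha>\beta>0}\frac{\mathrm{d}\alpha\,\mathrm{d}\beta}{\sqrt{\bigl((1+f)^2-4f\cos^2\alpha\bigr)\bigl((1+f)^2-4f\sin^2\beta\bigr)}}.$$ Let $\theta=f\,\frac{\mathrm{d}}{\mathrm{d}f}$ and put $g(f)=I_2(f)/(1+f)$. Define $$R(f)=\frac1f\Bigl(\theta^3 g-2f\,(\theta^3+\theta)\bigl(f\,g\bigr)+f^2\,\theta^3\bigl(f^2 g\bigr)\Bigr),$$ that is, $R=L(f,\theta)I_2$ for the operator $L(f,\theta)=\frac1f\bigl(\theta^3-2f(\theta^3+\theta)f+f^2\theta^3f^2\bigr)\frac1{1+f}$, where powers of $f$ act as multiplication operators and the operators are composed from right to left. Then for $0<f<1$, $$R(f)=2\left(\frac{2f}{1+f^2}\right)^2-1.$$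
   Context: The paper does not specify an explicit domain for this identity; it is stated here on $0<f<1$, where $I_2$ is real-analytic. *)

From Stdlib Require Import Reals.
From Coquelicot Require Import Coquelicot.
Open Scope R_scope.

Definition I2_integrand (f a b : R) : R :=
  1 / sqrt (((1 + f) ^ 2 - 4 * f * (cos a) ^ 2) *
            ((1 + f) ^ 2 - 4 * f * (sin b) ^ 2)).

(* I_2(f) = (1+f) * double integral over the triangle pi/2 > alpha > beta > 0,
   written as the iterated integral  int_0^{pi/2} d alpha int_0^alpha d beta. *)
Definition I2 (f : R) : R :=
  (1 + f) * RInt (fun a => RInt (fun b => I2_integrand f a b) 0 a) 0 (PI / 2).

Definition theta (h : R -> R) : R -> R := fun x => x * Derive h x.

Definition theta3 (h : R -> R) : R -> R := theta (theta (theta h)).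

Definition g (f : R) : R := I2 f / (1 + f).

Definition Rop (f : R) : R :=
  / f * ( theta3 g f
          - 2 * f * (theta3 (fun x => x * g x) f + theta (fun x => x * g x) f)
          + f ^ 2 * theta3 (fun x => x ^ 2 * g x) f ).

From Stdlib Require Import Reals Lra Lia.
From Coquelicot Require Import Coquelicot.
Open Scope R_scope.

(* Write the integrand as [k (cos a ^ 2) * k (sin b ^ 2)] with [k s = q f s ^ (-1/2)] and
   [q f s = (1 + f) ^ 2 - 4 f s].  Differentiating under the integral sign, [g^(j)] is the
   integral over [a] in [[0, pi/2]] of the [j]-th f-derivative of [k (cos a ^ 2) * V f a],
   where [V f a = int_0^a k (sin b ^ 2) db], so [R f = sum_j P_j f * g^(j) f] is a single
   integral over [a].  The incomplete integral [V] satisfies the Picard-Fuchs equation of the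
   complete elliptic integral up to an exact a-derivative; eliminating [d^2 V / df^2] and
   [d^3 V / df^3] with it turns the integrand of [R f] into an explicit a-derivative, and [R f]
   is the difference of its boundary values at [a = pi/2] and [a = 0]. *)

Lemma is_derive_eq (h : R -> R) (x l l' : R) :
  is_derive h x l -> l = l' -> is_derive h x l'.
Proof. intros H ->; exact H. Qed.

Lemma is_derive_Rplus (h k : R -> R) (x dh dk : R) :
  is_derive h x dh -> is_derive k x dk -> is_derive (fun y => h y + k y) x (dh + dk).
Proof. exact (is_derive_plus h k x dh dk). Qed.

Lemma is_derive_Rminus (h k : R -> R) (x dh dk : R) :
  is_derive h x dh -> is_derive k x dk -> is_derive (fun y => h y - k y) x (dh - dk).
Proof. exact (is_derive_minus h k x dh dk). Qed.

Lemma is_derive_Rmult (h k : R -> R) (x dh dk : R) :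
  is_derive h x dh -> is_derive k x dk ->
  is_derive (fun y => h y * k y) x (dh * k x + h x * dk).
Proof. intros Hh Hk. apply (is_derive_mult h k x dh dk Hh Hk), Rmult_comm. Qed.

Lemma is_derive_Rcomp (h k : R -> R) (x dh dk : R) :
  is_derive h (k x) dh -> is_derive k x dk -> is_derive (fun y => h (k y)) x (dk * dh).
Proof. exact (is_derive_comp h k x dh dk). Qed.

Lemma eq_of_is_derive_eq (F H F' : R -> R) (a : R) :
  (forall t, is_derive F t (F' t)) -> (forall t, is_derive H t (F' t)) ->
  F 0 = H 0 -> F a = H a.
Proof.
  intros HF HH E0.
  assert (HD : forall t, is_derive (fun t => F t - H t) t 0).
  { intros t. eapply is_derive_eq; [apply is_derive_Rminus; [apply HF | apply HH] | ring]. }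
  pose proof (is_RInt_derive _ _ 0 a (fun t _ => HD t)
                (fun t _ => continuous_const (0 : R) t)) as HI.
  apply is_RInt_unique in HI.
  rewrite RInt_const in HI. unfold scal, minus, plus, opp in HI; simpl in HI.
  unfold mult in HI; simpl in HI. lra.
Qed.

Lemma ex_derive_continuity_pt (h : R -> R) (x : R) : ex_derive h x -> continuity_pt h x.
Proof. intros H. apply continuity_pt_filterlim. exact (ex_derive_continuous h x H). Qed.

Lemma sin_pow2 (t : R) : sin t ^ 2 = 1 - cos t ^ 2.
Proof. rewrite <- !Rsqr_pow2. apply sin2. Qed.

Lemma is_derive_sin_cos_sin2 (h : R -> R) (dh t : R) : is_derive h (sin t ^ 2) dh ->
  is_derive (fun t => sin t * cos t * h (sin t ^ 2)) t
    ((1 - 2 * sin t ^ 2) * h (sin t ^ 2) + 2 * sin t ^ 2 * (1 - sin t ^ 2) * dh).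
Proof.
  intros Hh. auto_derive; [exists dh; exact Hh|].
  replace (sin t * (sin t * 1)) with (sin t ^ 2) by ring.
  replace (Derive (fun x => h x) _) with dh by (symmetry; apply is_derive_unique, Hh).
  pose proof (sin2_cos2 t) as H. unfold Rsqr in H.
  apply Rminus_diag_uniq.
  transitivity ((sin t * sin t + cos t * cos t - 1) * (h (sin t ^ 2) + 2 * sin t ^ 2 * dh)); [ring|].
  rewrite H; ring.
Qed.

Lemma is_derive_sin_cos_cos2 (h : R -> R) (dh t : R) : is_derive h (cos t ^ 2) dh ->
  is_derive (fun t => sin t * cos t * h (cos t ^ 2)) t
    ((2 * cos t ^ 2 - 1) * h (cos t ^ 2) - 2 * cos t ^ 2 * (1 - cos t ^ 2) * dh).
Proof.
  intros Hh. auto_derive; [exists dh; exact Hh|].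
  replace (cos t * (cos t * 1)) with (cos t ^ 2) by ring.
  replace (Derive (fun x => h x) _) with dh by (symmetry; apply is_derive_unique, Hh).
  pose proof (sin2_cos2 t) as H. unfold Rsqr in H.
  apply Rminus_diag_uniq.
  transitivity ((sin t * sin t + cos t * cos t - 1) * (- h (cos t ^ 2) - 2 * cos t ^ 2 * dh)); [ring|].
  rewrite H; ring.
Qed.

(** * Integrals depending on a parameter *)

Ltac cont2d :=
  match goal with
  | |- continuity_2d_pt (fun u v => @?f u v + @?g u v) _ _ =>
      refine (continuity_2d_pt_plus f g _ _ _ _); cont2d
  | |- continuity_2d_pt (fun u v => @?f u v - @?g u v) _ _ =>
      refine (continuity_2d_pt_minus f g _ _ _ _); cont2d
  | |- continuity_2d_pt (fun u v => @?f u v * @?g u v) _ _ =>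
      refine (continuity_2d_pt_mult f g _ _ _ _); cont2d
  | |- continuity_2d_pt (fun u v => @?f u v ^ ?n) _ _ =>
      refine (continuity_1d_2d_pt_comp (fun y => y ^ n) f _ _ _ _);
      [apply ex_derive_continuity_pt; auto_derive; exact I | cont2d]
  | |- continuity_2d_pt (fun u v => u) _ _ => apply continuity_2d_pt_id1
  | |- continuity_2d_pt (fun u v => v) _ _ => apply continuity_2d_pt_id2
  | |- continuity_2d_pt (fun u v => ?h u) _ _ =>
      refine (continuity_1d_2d_pt_comp h (fun u v => u) _ _ _ (continuity_2d_pt_id1 _ _))
  | |- continuity_2d_pt (fun u v => ?h v) _ _ =>
      refine (continuity_1d_2d_pt_comp h (fun u v => v) _ _ _ (continuity_2d_pt_id2 _ _))
  | |- continuity_2d_pt (fun u v => ?c) _ _ => apply continuity_2d_pt_const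
  | _ => idtac
  end.

Lemma continuity_pt_of_continuity_2d_pt (h : R -> R -> R) (x y : R) :
  continuity_2d_pt h x y -> continuity_pt (h x) y.
Proof.
  intros H eps Heps.
  destruct (H (mkposreal eps Heps)) as [d Hd]. exists d. split; [apply cond_pos|].
  intros z [_ Hz]. simpl in *. unfold R_dist in *. apply Hd; [|exact Hz].
  rewrite Rminus_eq_0, Rabs_R0; apply cond_pos.
Qed.

Lemma continuous_of_continuity_2d_pt (h : R -> R -> R) (x y : R) :
  continuity_2d_pt h x y -> continuous (h x) y.
Proof. intros H. apply continuity_pt_filterlim, continuity_pt_of_continuity_2d_pt, H. Qed.

Lemma ex_RInt_of_continuity_2d_pt (h : R -> R -> R) (x a b : R) :
  (forall t, continuity_2d_pt h x t) -> ex_RInt (h x) a b.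
Proof.
  intros H. apply (ex_RInt_continuous (V := R_CompleteNormedModule)).
  intros z _. apply continuous_of_continuity_2d_pt, H.
Qed.

Lemma abs_RInt_0_sub_le (h k : R -> R) (a v B e : R) :
  (forall c d, ex_RInt h c d) -> (forall c d, ex_RInt k c d) ->
  (forall t, Rmin a v <= t <= Rmax a v -> Rabs (h t) <= B) ->
  (forall t, Rmin 0 a <= t <= Rmax 0 a -> Rabs (h t - k t) <= e) ->
  Rabs (RInt h 0 v - RInt k 0 a) <= Rabs (v - a) * B + Rabs a * e.
Proof.
  intros Hh Hk HB He.
  replace (RInt h 0 v - RInt k 0 a)
    with (RInt h a v + RInt (fun t => h t - k t) 0 a).
  2:{ rewrite <- (RInt_Chasles h 0 a v) by apply Hh.
      rewrite (RInt_minus h k) by (apply Hh || apply Hk).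
      unfold minus, plus, opp; simpl. ring. }
  eapply Rle_trans; [apply Rabs_triang|].
  apply Rplus_le_compat.
  - apply (norm_RInt_le_const_abs h a v); [exact HB |].
    apply (RInt_correct (V := R_CompleteNormedModule)), Hh.
  - rewrite <- (Rminus_0_r a) at 2.
    apply (norm_RInt_le_const_abs (fun t => h t - k t) 0 a); [exact He|].
    apply (RInt_correct (V := R_CompleteNormedModule)).
    apply (ex_RInt_minus (V := R_NormedModule)); [apply Hh | apply Hk].
Qed.

Lemma between_of_Rmin_Rmax (c d t lo hi : R) :
  lo <= c <= hi -> lo <= d <= hi -> Rmin c d <= t <= Rmax c d -> lo <= t <= hi.
Proof.
  intros Hc Hd Ht.
  pose proof (Rmin_glb c d lo (proj1 Hc) (proj1 Hd)).
  pose proof (Rmax_lub c d hi (proj2 Hc) (proj2 Hd)). lra.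
Qed.

Lemma uniformly_close_bounded (phi : R -> R -> R) (l r x0 T e : R) :
  l < x0 < r -> 0 <= T -> (forall b, continuity_2d_pt phi x0 b) -> 0 < e ->
  exists B d, 0 < d /\ forall u b, Rabs (u - x0) < d -> -T <= b <= T ->
    l < u < r /\ Rabs (phi u b - phi x0 b) < e /\ Rabs (phi u b) <= B.
Proof.
  intros Hx HT Hc He.
  destruct (uniform_continuity_2d_1d' phi (-T) T x0 (fun b _ => Hc b) (mkposreal e He))
    as [d Hd]; simpl in Hd.
  destruct (continuity_ab_maj (fun b => Rabs (phi x0 b)) (-T) T) as [bmax [HM _]]; [lra| |].
  { intros c _. apply (continuity_pt_comp (phi x0) Rabs).
    - apply continuity_pt_of_continuity_2d_pt, Hc.
    - apply Rcontinuity_abs. }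
  exists (Rabs (phi x0 bmax) + e), (Rmin d (Rmin (x0 - l) (r - x0))).
  pose proof (cond_pos d).
  split; [repeat apply Rmin_glb_lt; lra|].
  intros u b Hu Hb.
  pose proof (Rmin_l d (Rmin (x0 - l) (r - x0))). pose proof (Rmin_r d (Rmin (x0 - l) (r - x0))).
  pose proof (Rmin_l (x0 - l) (r - x0)). pose proof (Rmin_r (x0 - l) (r - x0)).
  apply Rabs_lt_between' in Hu.
  assert (Hclose : Rabs (phi u b - phi x0 b) < e).
  { apply (Hd b x0 b u); try lra. rewrite Rminus_eq_0, Rabs_R0. lra. }
  split; [lra | split; [exact Hclose|]].
  pose proof (HM b Hb). pose proof (Rabs_triang (phi u b - phi x0 b) (phi x0 b)).
  replace (phi u b - phi x0 b + phi x0 b) with (phi u b) in * by ring. simpl in *. lra.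
Qed.

(* The split [int_0^v phi u - int_0^a0 phi x0 = int_a0^v phi u + int_0^a0 (phi u - phi x0)]
   needs [phi u] bounded near [a0] and uniformly close to [phi x0] on [[0, a0]]. *)
Lemma continuity_2d_pt_RInt_0 (phi : R -> R -> R) (l r x0 a0 : R) :
  l < x0 < r -> (forall x b, l < x < r -> continuity_2d_pt phi x b) ->
  continuity_2d_pt (fun x a => RInt (phi x) 0 a) x0 a0.
Proof.
  intros Hx Hc eps.
  set (T := Rabs a0 + 1).
  assert (HT : -T <= a0 - 1 /\ a0 + 1 <= T /\ -T < a0 < T)
    by (pose proof (Rle_abs a0); pose proof (Rabs_maj2 a0); unfold T; lra).
  set (e := eps / (2 * T)).
  assert (He : 0 < e) by (apply Rdiv_lt_0_compat; [apply cond_pos | lra]).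
  destruct (uniformly_close_bounded phi l r x0 T e Hx ltac:(lra) (fun b => Hc x0 b Hx) He)
    as [B [d1 [Hd1 Hclose]]].
  assert (HB : 0 <= B).
  { destruct (Hclose x0 0) as [_ [_ H0]]; [rewrite Rminus_eq_0, Rabs_R0; lra | lra |].
    pose proof (Rabs_pos (phi x0 0)). lra. }
  set (d2 := eps / (2 * (B + 1))).
  assert (Hd2 : 0 < d2) by (apply Rdiv_lt_0_compat; [apply cond_pos | lra]).
  assert (Hd : 0 < Rmin d1 (Rmin 1 d2)) by (repeat apply Rmin_glb_lt; lra).
  exists (mkposreal _ Hd). intros u v Hu Hv. simpl in Hu, Hv.
  pose proof (Rmin_l d1 (Rmin 1 d2)). pose proof (Rmin_r d1 (Rmin 1 d2)).
  pose proof (Rmin_l 1 d2). pose proof (Rmin_r 1 d2).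
  assert (Hv1 : a0 - 1 < v < a0 + 1) by (apply Rabs_lt_between'; lra).
  assert (Hul : l < u < r) by (apply (Hclose u 0); lra).
  assert (Hint : forall x c d, l < x < r -> ex_RInt (phi x) c d)
    by (intros x c d Hx'; apply ex_RInt_of_continuity_2d_pt; intros t; apply Hc, Hx').
  eapply Rle_lt_trans.
  - apply (abs_RInt_0_sub_le (phi u) (phi x0) a0 v B e);
      [intros; apply Hint, Hul | intros; apply Hint, Hx | |].
    + intros t Ht. apply (Hclose u t); [lra|].
      apply (between_of_Rmin_Rmax a0 v); lra.
    + intros t Ht. apply Rlt_le, (Hclose u t); [lra|].
      apply (between_of_Rmin_Rmax 0 a0); lra.
  - assert (Rabs (v - a0) * B < eps / 2).
    { apply Rle_lt_trans with (d2 * B); [apply Rmult_le_compat_r; lra|].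
      unfold d2. apply (Rmult_lt_reg_r (2 * (B + 1))); [lra|].
      field_simplify; [|lra]. pose proof (cond_pos eps). nra. }
    assert (Rabs a0 * e < eps / 2).
    { unfold e. apply (Rmult_lt_reg_r (2 * T)); [lra|].
      field_simplify; [|lra]. pose proof (cond_pos eps). unfold T. nra. }
    lra.
Qed.

Lemma is_derive_RInt_param_strip (F F' : R -> R -> R) (l r c d x : R) : l < x < r ->
  (forall y t, l < y < r -> is_derive (fun y => F y t) y (F' y t)) ->
  (forall y t, l < y < r -> continuity_2d_pt F y t) ->
  (forall y t, l < y < r -> continuity_2d_pt F' y t) ->
  is_derive (fun y => RInt (F y) c d) x (RInt (F' x) c d).
Proof.
  intros Hx HD HF HF'.
  assert (Hloc : locally x (fun y => l < y < r))
    by (apply (locally_interval _ x l r); simpl; tauto).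
  eapply is_derive_eq.
  - apply (is_derive_RInt_param F c d x).
    + apply (filter_imp (fun y => l < y < r)); [|exact Hloc].
      intros y Hy t _. eexists. apply HD, Hy.
    + intros t _. apply continuity_2d_pt_ext_loc with (f := F').
      * destruct Hloc as [e He]. exists e. intros u v Hu _.
        symmetry. apply is_derive_unique, HD, He, Hu.
      * apply HF', Hx.
    + apply (filter_imp (fun y => l < y < r)); [|exact Hloc].
      intros y Hy. apply ex_RInt_of_continuity_2d_pt. intros t. apply HF, Hy.
  - apply RInt_ext. intros t _. apply is_derive_unique, HD, Hx.
Qed.

Definition rsqrt_pow (n : nat) (y : R) : R := / (y ^ n * sqrt y).

Lemma is_derive_rsqrt_pow (n : nat) (y : R) : 0 < y ->
  is_derive (rsqrt_pow n) y (- (2 * INR n + 1) / 2 * rsqrt_pow (S n) y).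
Proof.
  intros Hy. unfold rsqrt_pow.
  assert (Hs : 0 < sqrt y) by (apply sqrt_lt_R0; exact Hy).
  assert (Hss : sqrt y * sqrt y = y) by (apply sqrt_sqrt; lra).
  assert (Hn : 0 < y ^ n) by (apply pow_lt; exact Hy).
  auto_derive.
  - repeat split; auto. nra.
  - set (r := sqrt y) in *. clearbody r. subst y.
    destruct n as [|n].
    + simpl. field. lra.
    + rewrite S_INR. simpl pred. simpl pow. field.
      split; [lra|]. apply pow_nonzero. intro Hc; nra.
Qed.

Definition q (x k : R) : R := (1 + x) ^ 2 - 4 * x * k.
Definition dqdx (x k : R) : R := 2 * (1 + x) - 4 * k.
Definition qpow (n : nat) (x k : R) : R := rsqrt_pow n (q x k).

(* [kern m x k] is the [m]-th derivative of [x |-> q x k ^ (-1/2)] for [m <= 3];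
   the last branch is meaningless for [m > 3]. *)
Definition kern (m : nat) (x k : R) : R :=
  match m with
  | O => qpow 0 x k
  | 1%nat => -1/2 * dqdx x k * qpow 1 x k
  | 2%nat => 3/4 * dqdx x k ^ 2 * qpow 2 x k - qpow 1 x k
  | _ => 9/2 * dqdx x k * qpow 2 x k - 15/8 * dqdx x k ^ 3 * qpow 3 x k
  end.

Lemma q_pos (x k : R) : 0 < x < 1 -> 0 <= k <= 1 -> 0 < q x k.
Proof. intros; unfold q; nra. Qed.

Lemma q_cos2_pos (x t : R) : 0 < x < 1 -> 0 < q x (cos t ^ 2).
Proof.
  intros Hx. apply q_pos; [exact Hx|].
  pose proof (pow2_ge_0 (sin t)). pose proof (pow2_ge_0 (cos t)). rewrite sin_pow2 in *. lra.
Qed.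

Lemma q_sin2_pos (x t : R) : 0 < x < 1 -> 0 < q x (sin t ^ 2).
Proof.
  intros Hx. apply q_pos; [exact Hx|].
  pose proof (pow2_ge_0 (sin t)). pose proof (pow2_ge_0 (cos t)). rewrite sin_pow2 in *. lra.
Qed.

Lemma is_derive_qpow_x (n : nat) (x k : R) : 0 < q x k ->
  is_derive (fun x => qpow n x k) x (- (2 * INR n + 1) / 2 * dqdx x k * qpow (S n) x k).
Proof.
  intros Hq. unfold qpow. eapply is_derive_eq.
  - apply (is_derive_Rcomp (rsqrt_pow n) (fun x => q x k)).
    + apply is_derive_rsqrt_pow, Hq.
    + unfold q. auto_derive; [exact I | reflexivity].
  - unfold dqdx. ring.
Qed.

Lemma is_derive_qpow_k (n : nat) (x k : R) : 0 < q x k ->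
  is_derive (qpow n x) k (2 * x * (2 * INR n + 1) * qpow (S n) x k).
Proof.
  intros Hq. unfold qpow. eapply is_derive_eq.
  - apply (is_derive_Rcomp (rsqrt_pow n) (q x)).
    + apply is_derive_rsqrt_pow, Hq.
    + unfold q. auto_derive; [exact I | reflexivity].
  - field.
Qed.

Lemma is_derive_kern (m : nat) (x k : R) : (m <= 2)%nat -> 0 < q x k ->
  is_derive (fun x => kern m x k) x (kern (S m) x k).
Proof.
  intros Hm Hq.
  assert (Dq : forall n, Derive (fun x => qpow n x k) x
                         = - (2 * INR n + 1) / 2 * dqdx x k * qpow (S n) x k)
    by (intros n; apply is_derive_unique, is_derive_qpow_x, Hq).
  assert (Eq : forall n, ex_derive (fun x => qpow n x k) x)
    by (intros n; eexists; apply is_derive_qpow_x, Hq).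
  destruct m as [|[|[|]]]; [ | | | lia]; unfold kern.
  - eapply is_derive_eq; [apply is_derive_qpow_x, Hq | simpl; field].
  - unfold dqdx. auto_derive; [repeat split; apply Eq|]. rewrite !Dq. unfold dqdx; simpl; field.
  - unfold dqdx. auto_derive; [repeat split; apply Eq|]. rewrite !Dq. unfold dqdx; simpl; field.
Qed.

Lemma continuity_2d_pt_qpow (n : nat) (K : R -> R) (x y : R) :
  (forall t, continuity_pt K t) -> 0 < q x (K y) ->
  continuity_2d_pt (fun u v => qpow n u (K v)) x y.
Proof.
  intros HK Hq. unfold qpow.
  apply (continuity_1d_2d_pt_comp (rsqrt_pow n) (fun u v => q u (K v))).
  - apply ex_derive_continuity_pt. eexists. apply is_derive_rsqrt_pow, Hq.
  - unfold q. cont2d. apply HK.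
Qed.

Lemma continuity_2d_pt_kern (m : nat) (K : R -> R) (x y : R) :
  (forall t, continuity_pt K t) -> 0 < q x (K y) ->
  continuity_2d_pt (fun u v => kern m u (K v)) x y.
Proof.
  intros HK Hq.
  destruct m as [|[|[|]]]; unfold kern, dqdx; cont2d;
    solve [apply continuity_2d_pt_qpow; assumption | apply HK].
Qed.

Lemma continuity_2d_pt_kern_sin2 (m : nat) (x y : R) : 0 < x < 1 ->
  continuity_2d_pt (fun u v => kern m u (sin v ^ 2)) x y.
Proof.
  intros Hx. apply (continuity_2d_pt_kern m (fun t => sin t ^ 2)).
  - intros t. apply ex_derive_continuity_pt. auto_derive. exact I.
  - apply q_sin2_pos, Hx.
Qed.

Lemma continuity_2d_pt_kern_cos2 (m : nat) (x y : R) : 0 < x < 1 ->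
  continuity_2d_pt (fun u v => kern m u (cos v ^ 2)) x y.
Proof.
  intros Hx. apply (continuity_2d_pt_kern m (fun t => cos t ^ 2)).
  - intros t. apply ex_derive_continuity_pt. auto_derive. exact I.
  - apply q_cos2_pos, Hx.
Qed.

(** * Derivatives of g under the integral sign *)

Definition inner (m : nat) (x a : R) : R := RInt (fun b => kern m x (sin b ^ 2)) 0 a.

Lemma is_derive_inner_x (m : nat) (x a : R) : (m <= 2)%nat -> 0 < x < 1 ->
  is_derive (fun x => inner m x a) x (inner (S m) x a).
Proof.
  intros Hm Hx. unfold inner.
  apply (is_derive_RInt_param_strip (fun y b => kern m y (sin b ^ 2))
           (fun y b => kern (S m) y (sin b ^ 2)) 0 1); [exact Hx | | |].
  - intros y t Hy. apply is_derive_kern, q_sin2_pos; assumption.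
  - intros y t Hy. apply continuity_2d_pt_kern_sin2, Hy.
  - intros y t Hy. apply continuity_2d_pt_kern_sin2, Hy.
Qed.

Lemma is_derive_inner_a (m : nat) (x a : R) : 0 < x < 1 ->
  is_derive (inner m x) a (kern m x (sin a ^ 2)).
Proof.
  intros Hx. unfold inner.
  apply (is_derive_RInt (fun b => kern m x (sin b ^ 2)) (RInt (fun b => kern m x (sin b ^ 2)) 0) 0).
  - apply filter_forall. intros b. apply (RInt_correct (V := R_CompleteNormedModule)).
    apply (ex_RInt_of_continuity_2d_pt (fun u v => kern m u (sin v ^ 2))).
    intros t. apply continuity_2d_pt_kern_sin2, Hx.
  - apply (continuous_of_continuity_2d_pt (fun u v => kern m u (sin v ^ 2))).
    apply continuity_2d_pt_kern_sin2, Hx.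
Qed.

Lemma continuity_2d_pt_inner (m : nat) (x a : R) : 0 < x < 1 ->
  continuity_2d_pt (inner m) x a.
Proof.
  intros Hx. apply (continuity_2d_pt_RInt_0 (fun x b => kern m x (sin b ^ 2)) 0 1); [exact Hx|].
  intros y b Hy. apply continuity_2d_pt_kern_sin2, Hy.
Qed.

Lemma inner_0 (m : nat) (x : R) : inner m x 0 = 0.
Proof. unfold inner. rewrite RInt_point. reflexivity. Qed.

(* Leibniz's rule: [outer j x a] is the [j]-th x-derivative of
   [kern 0 x (cos a ^ 2) * inner 0 x a], for [j <= 3]. *)
Definition outer (j : nat) (x a : R) : R :=
  let kc m := kern m x (cos a ^ 2) in
  match j with
  | O => kc 0%nat * inner 0 x a
  | 1%nat => kc 1%nat * inner 0 x a + kc 0%nat * inner 1 x a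
  | 2%nat => kc 2%nat * inner 0 x a + 2 * (kc 1%nat * inner 1 x a) + kc 0%nat * inner 2 x a
  | _ => kc 3%nat * inner 0 x a + 3 * (kc 2%nat * inner 1 x a)
         + 3 * (kc 1%nat * inner 2 x a) + kc 0%nat * inner 3 x a
  end.

Lemma is_derive_outer_x (j : nat) (x a : R) : (j <= 2)%nat -> 0 < x < 1 ->
  is_derive (fun x => outer j x a) x (outer (S j) x a).
Proof.
  intros Hj Hx.
  assert (Dk : forall m, (m <= 2)%nat ->
               is_derive (fun x => kern m x (cos a ^ 2)) x (kern (S m) x (cos a ^ 2)))
    by (intros m Hm; apply is_derive_kern, q_cos2_pos; assumption).
  assert (Di : forall m, (m <= 2)%nat -> is_derive (fun x => inner m x a) x (inner (S m) x a))
    by (intros m Hm; apply is_derive_inner_x; assumption).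
  destruct j as [|[|[|]]]; [ | | | lia]; unfold outer; cbv beta zeta; eapply is_derive_eq.
  - apply is_derive_Rmult; [apply (Dk 0%nat) | apply (Di 0%nat)]; lia.
  - cbv beta; ring.
  - apply is_derive_Rplus; apply is_derive_Rmult;
      [apply (Dk 1%nat) | apply (Di 0%nat) | apply (Dk 0%nat) | apply (Di 1%nat)]; lia.
  - cbv beta; ring.
  - apply is_derive_Rplus; [apply is_derive_Rplus|];
      [apply is_derive_Rmult | apply is_derive_scal, is_derive_Rmult | apply is_derive_Rmult];
      [apply (Dk 2%nat) | apply (Di 0%nat) | apply (Dk 1%nat) | apply (Di 1%nat)
      | apply (Dk 0%nat) | apply (Di 2%nat)]; lia.
  - cbv beta; ring.
Qed.

Lemma continuity_2d_pt_outer (j : nat) (x a : R) : 0 < x < 1 ->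
  continuity_2d_pt (outer j) x a.
Proof.
  intros Hx.
  destruct j as [|[|[|]]]; unfold outer; cbv beta zeta; cont2d;
    solve [apply continuity_2d_pt_kern_cos2, Hx | apply continuity_2d_pt_inner, Hx].
Qed.

Definition gder (j : nat) (x : R) : R := RInt (outer j x) 0 (PI / 2).

Lemma is_derive_gder (j : nat) (x : R) : (j <= 2)%nat -> 0 < x < 1 ->
  is_derive (gder j) x (gder (S j) x).
Proof.
  intros Hj Hx. unfold gder.
  apply (is_derive_RInt_param_strip (outer j) (outer (S j)) 0 1); [exact Hx | | |].
  - intros y t Hy. apply is_derive_outer_x; assumption.
  - intros y t Hy. apply continuity_2d_pt_outer, Hy.
  - intros y t Hy. apply continuity_2d_pt_outer, Hy.
Qed.

Lemma I2_integrand_eq (x a b : R) : 0 < x < 1 ->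
  I2_integrand x a b = kern 0 x (cos a ^ 2) * kern 0 x (sin b ^ 2).
Proof.
  intros Hx. pose proof (q_cos2_pos x a Hx). pose proof (q_sin2_pos x b Hx).
  unfold I2_integrand, kern, qpow, rsqrt_pow. unfold q in *. rewrite !pow_O.
  rewrite sqrt_mult by lra.
  assert (0 < sqrt ((1 + x) ^ 2 - 4 * x * cos a ^ 2)) by (apply sqrt_lt_R0; lra).
  assert (0 < sqrt ((1 + x) ^ 2 - 4 * x * sin b ^ 2)) by (apply sqrt_lt_R0; lra).
  field. split; lra.
Qed.

Lemma g_eq_gder0 (x : R) : 0 < x < 1 -> g x = gder 0 x.
Proof.
  intros Hx. unfold g, I2, gder.
  assert (Hcancel : forall u : R, (1 + x) * u / (1 + x) = u) by (intros u; field; lra).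
  rewrite Hcancel.
  apply RInt_ext. intros a _. unfold outer, inner. cbv beta zeta.
  rewrite <- (RInt_scal (V := R_CompleteNormedModule)).
  - apply RInt_ext. intros b _. apply I2_integrand_eq, Hx.
  - apply (ex_RInt_of_continuity_2d_pt (fun u v => kern 0 u (sin v ^ 2))).
    intros t. apply continuity_2d_pt_kern_sin2, Hx.
Qed.

(** * R(f) as a single integral *)

Lemma theta_ext_01 (F H : R -> R) (z : R) : 0 < z < 1 ->
  (forall u, 0 < u < 1 -> F u = H u) -> theta F z = theta H z.
Proof.
  intros Hz E. unfold theta. f_equal. apply Derive_ext_loc.
  apply (locally_interval _ z 0 1); simpl; [tauto | tauto |]. intros y Hy0 Hy1. apply E. lra.
Qed.

Lemma theta_of_is_derive (F : R -> R) (z l : R) : is_derive F z l -> theta F z = z * l.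
Proof. intros H. unfold theta. rewrite (is_derive_unique _ _ _ H). reflexivity. Qed.

Ltac derive_gder u Hu :=
  assert (Dg : forall j, (j <= 2)%nat -> Derive (fun x => gder j x) u = gder (S j) u)
    by (intros j Hj; apply is_derive_unique, is_derive_gder; [exact Hj | exact Hu]);
  assert (Eg : forall j, (j <= 2)%nat -> ex_derive (fun x => gder j x) u)
    by (intros j Hj; eexists; apply is_derive_gder; [exact Hj | exact Hu]);
  auto_derive; [repeat split; apply Eg; lia | rewrite ?Dg by lia; ring].

Lemma theta3_g (u : R) : 0 < u < 1 ->
  theta3 g u = u * (gder 1 u + 3 * u * gder 2 u + u ^ 2 * gder 3 u).
Proof.
  intros Hu.
  assert (T1 : forall u, 0 < u < 1 -> theta g u = u * gder 1 u).
  { intros v Hv. rewrite (theta_ext_01 g (gder 0) v Hv g_eq_gder0).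
    apply theta_of_is_derive, is_derive_gder; [lia | exact Hv]. }
  assert (T2 : forall u, 0 < u < 1 -> theta (theta g) u = u * (gder 1 u + u * gder 2 u)).
  { intros v Hv. rewrite (theta_ext_01 _ _ v Hv T1). apply theta_of_is_derive. derive_gder v Hv. }
  unfold theta3. rewrite (theta_ext_01 _ _ u Hu T2). apply theta_of_is_derive. derive_gder u Hu.
Qed.

Lemma theta_xg (u : R) : 0 < u < 1 ->
  theta (fun x => x * g x) u = u * (gder 0 u + u * gder 1 u).
Proof.
  intros Hu.
  rewrite (theta_ext_01 _ (fun x => x * gder 0 x) u Hu)
    by (intros v Hv; rewrite g_eq_gder0 by exact Hv; reflexivity).
  apply theta_of_is_derive. derive_gder u Hu.
Qed.

Lemma theta3_xg (u : R) : 0 < u < 1 ->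
  theta3 (fun x => x * g x) u
  = u * (gder 0 u + 7 * u * gder 1 u + 6 * u ^ 2 * gder 2 u + u ^ 3 * gder 3 u).
Proof.
  intros Hu.
  assert (T2 : forall u, 0 < u < 1 -> theta (theta (fun x => x * g x)) u
                                   = u * (gder 0 u + 3 * u * gder 1 u + u ^ 2 * gder 2 u)).
  { intros v Hv. rewrite (theta_ext_01 _ _ v Hv theta_xg).
    apply theta_of_is_derive. derive_gder v Hv. }
  unfold theta3. rewrite (theta_ext_01 _ _ u Hu T2). apply theta_of_is_derive. derive_gder u Hu.
Qed.

Lemma theta3_x2g (u : R) : 0 < u < 1 ->
  theta3 (fun x => x ^ 2 * g x) u
  = u * (8 * u * gder 0 u + 19 * u ^ 2 * gder 1 u + 9 * u ^ 3 * gder 2 u + u ^ 4 * gder 3 u).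
Proof.
  intros Hu.
  assert (T1 : forall u, 0 < u < 1 -> theta (fun x => x ^ 2 * g x) u
                                   = u * (2 * u * gder 0 u + u ^ 2 * gder 1 u)).
  { intros v Hv.
    rewrite (theta_ext_01 _ (fun x => x ^ 2 * gder 0 x) v Hv)
      by (intros w Hw; rewrite g_eq_gder0 by exact Hw; reflexivity).
    apply theta_of_is_derive. derive_gder v Hv. }
  assert (T2 : forall u, 0 < u < 1 -> theta (theta (fun x => x ^ 2 * g x)) u
                                   = u * (4 * u * gder 0 u + 5 * u ^ 2 * gder 1 u + u ^ 3 * gder 2 u)).
  { intros v Hv. rewrite (theta_ext_01 _ _ v Hv T1).
    apply theta_of_is_derive. derive_gder v Hv. }
  unfold theta3. rewrite (theta_ext_01 _ _ u Hu T2). apply theta_of_is_derive. derive_gder u Hu.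
Qed.

Definition P0 (x : R) : R := 8 * x ^ 3 - 4 * x.
Definition P1 (x : R) : R := 19 * x ^ 4 - 16 * x ^ 2 + 1.
Definition P2 (x : R) : R := 9 * x ^ 5 - 12 * x ^ 3 + 3 * x.
Definition P3 (x : R) : R := x ^ 2 * (1 - x ^ 2) ^ 2.

Lemma Rop_eq_gder (f : R) : 0 < f < 1 ->
  Rop f = P0 f * gder 0 f + P1 f * gder 1 f + P2 f * gder 2 f + P3 f * gder 3 f.
Proof.
  intros Hf. unfold Rop.
  rewrite theta3_g, theta3_xg, theta_xg, theta3_x2g by exact Hf.
  unfold P0, P1, P2, P3. field. lra.
Qed.

Definition rop_integrand (x a : R) : R :=
  P0 x * outer 0 x a + P1 x * outer 1 x a + P2 x * outer 2 x a + P3 x * outer 3 x a.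

Lemma gder_sum_eq_RInt (f : R) : 0 < f < 1 ->
  P0 f * gder 0 f + P1 f * gder 1 f + P2 f * gder 2 f + P3 f * gder 3 f
  = RInt (rop_integrand f) 0 (PI / 2).
Proof.
  intros Hf. symmetry. apply is_RInt_unique. unfold rop_integrand, gder.
  assert (Hj : forall j, is_RInt (outer j f) 0 (PI / 2) (RInt (outer j f) 0 (PI / 2))).
  { intros j. apply (RInt_correct (V := R_CompleteNormedModule)).
    apply ex_RInt_of_continuity_2d_pt. intros t. apply continuity_2d_pt_outer, Hf. }
  apply (is_RInt_plus (V := R_NormedModule));
    [apply (is_RInt_plus (V := R_NormedModule)); [apply (is_RInt_plus (V := R_NormedModule))|]|].
  all: apply (is_RInt_scal (V := R_NormedModule)), Hj.
Qed.

(** * Picard-Fuchs relations for the incomplete integral *)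

Definition pf0 (x : R) : R := 1 / (x ^ 2 - 1).
Definition pf1 (x : R) : R := (3 * x ^ 2 - 1) / (x * (x ^ 2 - 1)).
Definition d_pf0 (x : R) : R := -2 * x / (x ^ 2 - 1) ^ 2.
Definition d_pf1 (x : R) : R := - (3 * x ^ 4 + 1) / (x ^ 2 * (x ^ 2 - 1) ^ 2).
Definition bnd2 (x k : R) : R := -1 / x * qpow 1 x k.
Definition bnd3 (x k : R) : R := 1 / x ^ 2 * qpow 1 x k + 3 / (2 * x) * (dqdx x k * qpow 2 x k).

Lemma is_derive_bnd2 (x k : R) : 0 < x -> 0 < q x k ->
  is_derive (bnd2 x) k (-6 * qpow 2 x k).
Proof.
  intros Hx Hq. unfold bnd2. eapply is_derive_eq.
  - apply is_derive_scal, is_derive_qpow_k, Hq.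
  - simpl. field. lra.
Qed.

Lemma is_derive_bnd3 (x k : R) : 0 < x -> 0 < q x k ->
  is_derive (bnd3 x) k (15 * dqdx x k * qpow 3 x k).
Proof.
  intros Hx Hq. unfold bnd3. eapply is_derive_eq.
  - apply is_derive_Rplus; apply is_derive_scal;
      [| apply is_derive_Rmult; [unfold dqdx; auto_derive; [exact I | reflexivity] |]];
      apply is_derive_qpow_k, Hq.
  - simpl. field. lra.
Qed.

Lemma x2_sub1_neq0 (x : R) : 0 < x < 1 -> x ^ 2 - 1 <> 0.
Proof. intros Hx H. nra. Qed.

(* The Picard-Fuchs equation x (x^2 - 1) V'' + (3 x^2 - 1) V' + x V = 0 of the complete
   elliptic integral holds for the incomplete integral [inner 0] up to an exact
   a-derivative. *)
Lemma inner2_eq (x a : R) : 0 < x < 1 ->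
  inner 2 x a = - pf0 x * inner 0 x a - pf1 x * inner 1 x a + sin a * cos a * bnd2 x (sin a ^ 2).
Proof.
  intros Hx.
  apply (eq_of_is_derive_eq (inner 2 x)
    (fun t => - pf0 x * inner 0 x t - pf1 x * inner 1 x t + sin t * cos t * bnd2 x (sin t ^ 2))
    (fun t => kern 2 x (sin t ^ 2)));
    [intros t; apply is_derive_inner_a, Hx | intros t | rewrite !inner_0, sin_0; ring].
  pose proof (q_sin2_pos x t Hx) as Hq.
  eapply is_derive_eq.
  - apply is_derive_Rplus; [apply is_derive_Rminus|].
    + apply is_derive_scal, is_derive_inner_a, Hx.
    + apply is_derive_scal, is_derive_inner_a, Hx.
    + apply is_derive_sin_cos_sin2, is_derive_bnd2; [lra | exact Hq].
  - assert (0 < sqrt (q x (sin t ^ 2))) by (apply sqrt_lt_R0, Hq).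
    unfold bnd2, pf0, pf1, kern, qpow, rsqrt_pow, dqdx.
    set (sB := sqrt (q x (sin t ^ 2))) in *. unfold q in *. set (S := sin t ^ 2) in *.
    field. repeat split; try lra. all: apply x2_sub1_neq0, Hx.
Qed.

Lemma inner3_eq (x a : R) : 0 < x < 1 ->
  inner 3 x a = - d_pf0 x * inner 0 x a - (pf0 x + d_pf1 x) * inner 1 x a - pf1 x * inner 2 x a
                + sin a * cos a * bnd3 x (sin a ^ 2).
Proof.
  intros Hx.
  apply (eq_of_is_derive_eq (inner 3 x)
    (fun t => - d_pf0 x * inner 0 x t - (pf0 x + d_pf1 x) * inner 1 x t - pf1 x * inner 2 x t
              + sin t * cos t * bnd3 x (sin t ^ 2))
    (fun t => kern 3 x (sin t ^ 2)));
    [intros t; apply is_derive_inner_a, Hx | intros t | rewrite !inner_0, sin_0; ring].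
  pose proof (q_sin2_pos x t Hx) as Hq.
  eapply is_derive_eq.
  - apply is_derive_Rplus; [apply is_derive_Rminus; [apply is_derive_Rminus|]|].
    + apply is_derive_scal, is_derive_inner_a, Hx.
    + apply is_derive_scal, is_derive_inner_a, Hx.
    + apply is_derive_scal, is_derive_inner_a, Hx.
    + apply is_derive_sin_cos_sin2, is_derive_bnd3; [lra | exact Hq].
  - assert (0 < sqrt (q x (sin t ^ 2))) by (apply sqrt_lt_R0, Hq).
    unfold bnd3, pf0, pf1, d_pf0, d_pf1, kern, qpow, rsqrt_pow, dqdx.
    set (sB := sqrt (q x (sin t ^ 2))) in *. unfold q in *. set (S := sin t ^ 2) in *.
    field. repeat split; try lra. all: apply x2_sub1_neq0, Hx.
Qed.

(** * An explicit antiderivative *)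

Definition qsum (x : R) : R := 2 * (1 + x ^ 2).

Lemma qsum_sub_q (x k : R) : qsum x - q x k = q x (1 - k).
Proof. unfold qsum, q. ring. Qed.

Definition ya (x : R) : R := x * (1 - x ^ 2) / (1 + x ^ 2) ^ 2.
Definition yb (x : R) : R := - (1 - x ^ 2) ^ 3 / (16 * x * (1 + x ^ 2)).
Definition yrat (x A : R) : R :=
  ya x * (/ (qsum x - A) - / A) + yb x * (/ (qsum x - A) ^ 2 - / A ^ 2).
Definition d_yrat (x A : R) : R :=
  ya x * (/ (qsum x - A) ^ 2 + / A ^ 2) + yb x * (2 / (qsum x - A) ^ 3 + 2 / A ^ 3).
Definition ynum (x A : R) : R := A * (qsum x - A) * yrat x A.
Definition d_ynum (x A : R) : R := (qsum x - 2 * A) * yrat x A + A * (qsum x - A) * d_yrat x A.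
Definition yfun (x A : R) : R := ynum x A * rsqrt_pow 0 A * rsqrt_pow 0 (qsum x - A).
Definition d_yfun (x A : R) : R :=
  d_ynum x A * rsqrt_pow 0 A * rsqrt_pow 0 (qsum x - A)
  + ynum x A * (-1/2 * rsqrt_pow 1 A) * rsqrt_pow 0 (qsum x - A)
  + ynum x A * rsqrt_pow 0 A * (1/2 * rsqrt_pow 1 (qsum x - A)).

Ltac neq0 :=
  repeat (apply Rmult_integral_contrapositive_currified || apply pow_nonzero); try (intro; lra).

Lemma is_derive_ynum (x A : R) : 0 < A -> 0 < qsum x - A ->
  is_derive (ynum x) A (d_ynum x A).
Proof.
  intros HA HB. unfold ynum, d_ynum, yrat, d_yrat.
  auto_derive; [repeat split; neq0 | field; repeat split; neq0].
Qed.

Lemma is_derive_yfun (x A : R) : 0 < A -> 0 < qsum x - A ->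
  is_derive (yfun x) A (d_yfun x A).
Proof.
  intros HA HB. unfold yfun, d_yfun. eapply is_derive_eq.
  - apply is_derive_Rmult; [apply is_derive_Rmult|].
    + apply is_derive_ynum; assumption.
    + apply is_derive_rsqrt_pow, HA.
    + eapply is_derive_eq.
      * apply (is_derive_Rcomp (rsqrt_pow 0) (fun A => qsum x - A)).
        -- apply is_derive_rsqrt_pow, HB.
        -- auto_derive; [exact I | reflexivity].
      * reflexivity.
  - cbv beta. simpl INR. field.
Qed.

Definition xi (n : nat) (x a : R) : R := sin a * cos a * qpow n x (cos a ^ 2).

Lemma is_derive_xi (n : nat) (x a : R) : 0 < x < 1 ->
  is_derive (xi n x) a
    ((2 * cos a ^ 2 - 1) * qpow n x (cos a ^ 2)
     - 2 * cos a ^ 2 * (1 - cos a ^ 2) * (2 * x * (2 * INR n + 1) * qpow (S n) x (cos a ^ 2))).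
Proof.
  intros Hx. apply (is_derive_sin_cos_cos2 (qpow n x)), is_derive_qpow_k, q_cos2_pos, Hx.
Qed.

Definition u1 (x : R) : R := (7 * x ^ 4 - 6 * x ^ 2 - 1) / 2.
Definition u2 (x : R) : R := 3 / 2 * (1 - x ^ 2) ^ 3.
Definition u3 (x : R) : R := 3 * x * (1 - x ^ 2) ^ 2.

(* After [inner 2] and [inner 3] are eliminated with [inner2_eq] and [inner3_eq], the
   derivative identity below is rational in [cos a ^ 2], [inner 0 x a], [inner 1 x a] and the
   square roots of [q x (cos a ^ 2)] and [q x (sin a ^ 2) = qsum x - q x (cos a ^ 2)]. *)
Definition antider (x a : R) : R :=
  (u1 x * xi 1 x a + u2 x * xi 2 x a) * inner 0 x a + u3 x * xi 1 x a * inner 1 x a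
  + yfun x (q x (cos a ^ 2)).

Lemma is_derive_antider (x a : R) : 0 < x < 1 ->
  is_derive (antider x) a (rop_integrand x a).
Proof.
  intros Hx. unfold antider. eapply is_derive_eq.
  - apply is_derive_Rplus; [apply is_derive_Rplus|].
    + apply is_derive_Rmult; [|apply is_derive_inner_a, Hx].
      apply is_derive_Rplus; apply is_derive_scal, is_derive_xi, Hx.
    + apply is_derive_Rmult; [|apply is_derive_inner_a, Hx].
      apply is_derive_scal, is_derive_xi, Hx.
    + apply (is_derive_Rcomp (yfun x) (fun a => q x (cos a ^ 2))).
      * apply is_derive_yfun; [apply q_cos2_pos, Hx|].
        rewrite qsum_sub_q, <- sin_pow2. apply q_sin2_pos, Hx.
      * unfold q. auto_derive; [exact I | reflexivity].
  - unfold rop_integrand, outer. cbv beta zeta.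
    rewrite (inner3_eq x a Hx), (inner2_eq x a Hx).
    pose proof (q_cos2_pos x a Hx) as HA. pose proof (q_sin2_pos x a Hx) as HB.
    rewrite sin_pow2 in HB |- *.
    unfold xi, d_yfun, ynum, d_ynum, yrat, d_yrat. rewrite !qsum_sub_q.
    unfold bnd2, bnd3, u1, u2, u3, P0, P1, P2, P3, pf0, pf1, d_pf0, d_pf1, ya, yb, kern.
    unfold qpow, rsqrt_pow, dqdx. simpl INR.
    assert (HsA : 0 < sqrt (q x (cos a ^ 2))) by (apply sqrt_lt_R0, HA).
    assert (HsB : 0 < sqrt (q x (1 - cos a ^ 2))) by (apply sqrt_lt_R0, HB).
    set (sA := sqrt (q x (cos a ^ 2))) in *. set (sB := sqrt (q x (1 - cos a ^ 2))) in *.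
    set (V0 := inner 0 x a). set (V1 := inner 1 x a).
    unfold qsum, q in *. set (C := cos a ^ 2) in *. cbv beta.
    field.
    repeat split; try (intro; lra); try (apply x2_sub1_neq0, Hx); try (intro; nra).
Qed.

Lemma RInt_rop_integrand (f : R) : 0 < f < 1 ->
  RInt (rop_integrand f) 0 (PI / 2) = antider f (PI / 2) - antider f 0.
Proof.
  intros Hf. apply is_RInt_unique, (is_RInt_derive (antider f)).
  - intros t _. apply is_derive_antider, Hf.
  - intros t _. apply (continuous_of_continuity_2d_pt rop_integrand).
    unfold rop_integrand, P0, P1, P2, P3. cont2d; apply continuity_2d_pt_outer, Hf.
Qed.

Lemma antider_boundary (f : R) : 0 < f < 1 ->
  antider f (PI / 2) - antider f 0 = 2 * (2 * f / (1 + f ^ 2)) ^ 2 - 1.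
Proof.
  intros Hf. unfold antider, xi. rewrite sin_0, cos_0, cos_PI2.
  replace (q f (0 ^ 2)) with ((1 + f) ^ 2) by (unfold q; ring).
  replace (q f (1 ^ 2)) with ((1 - f) ^ 2) by (unfold q; ring).
  unfold yfun, ynum, yrat, rsqrt_pow, qsum, ya, yb.
  replace (2 * (1 + f ^ 2) - (1 + f) ^ 2) with ((1 - f) ^ 2) by ring.
  replace (2 * (1 + f ^ 2) - (1 - f) ^ 2) with ((1 + f) ^ 2) by ring.
  rewrite !sqrt_pow2 by lra. rewrite !pow_O.
  field. repeat split; try (intro; lra); try (intro; nra).
Qed.

Theorem theorem1 (f : R) (hf0 : 0 < f) (hf1 : f < 1) :
  Rop f = 2 * (2 * f / (1 + f ^ 2)) ^ 2 - 1.
Proof.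
  assert (Hf : 0 < f < 1) by lra.
  rewrite (Rop_eq_gder f Hf), (gder_sum_eq_RInt f Hf), (RInt_rop_integrand f Hf).
  apply antider_boundary, Hf.
Qed.
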